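(* Assume the $abc$-conjecture. Let $k\ge 3$ be an integer and $\epsilon>0$. Then there exist constants $c_\epsilon>0$ and $C>0$ (depending on $k$ and $\epsilon$) such that for every real $x \ge C$, the interval $(x,\ x + c_\epsilon x^{1-(2+\epsilon)/k}]$ contains at most one $k$-full number.
   Context: A positive integer $n$ is $k$-full if every prime $p$ dividing $n$ satisfies $p^k\mid n$. For a nonzero integer $m$, $\kappa(m)=\prod_{p\mid m} p$. The $abc$-conjecture is the statement: for every $\epsilon>0$ there is a constant $C_\epsilon>0$ such that for all integers $a,b,c$ with $a+b=c$ and $\gcd(a,b)=1$, one has $\max\{|a|,|b|,|c|\} \le C_\epsilon\, \kappa(abc)^{1+\epsilon}$. *)

From Stdlib Require Import Reals ZArith.
From mathcomp Require Import all_boot.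

Definition k_full (k n : nat) : Prop :=
  (0 < n)%N /\ forall p : nat, prime p -> (p %| n)%N -> (p ^ k %| n)%N.

Definition kappa (m : Z) : nat := (\prod_(p <- primes (Z.abs_nat m)) p)%N.

Open Scope R_scope.

Definition abc_conjecture : Prop :=
  forall eps : R, 0 < eps ->
  exists Ceps : R, 0 < Ceps /\
    forall a b c : Z, (a + b = c)%Z -> Z.gcd a b = 1%Z -> (a * b * c <> 0)%Z ->
      Rmax (IZR (Z.abs a)) (Rmax (IZR (Z.abs b)) (IZR (Z.abs c)))
        <= Ceps * Rpower (INR (kappa (a * b * c))) (1 + eps).

From Stdlib Require Import Reals ZArith Lra Lia.
From mathcomp Require Import all_boot zify.

(* Suppose m < n are k-full numbers in the interval and write m = a g, n = (a + d) g
   with g = gcd(m, n), so that a and d are coprime and n - m = d g.  Since a k-full N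
   satisfies rad(N)^k <= N, the abc inequality for the triple (a, d, a + d) with exponent
   1 + delta, delta = eps / k, gives
     a + d <= K (rad m rad n d)^(1+delta) <= K (n^(2/k) d)^(1+delta),
   hence n <= K (n^(2/k) (n - m))^(1+delta).  Inserting n - m <= c n^(1-(2+eps)/k)
   yields n <= K c^(1+delta) n^(1-delta^2), which is absurd once K c < 1.  When
   1 - (2+eps)/k < 0 the interval has length less than 1. *)

Section Radical.
Local Open Scope nat_scope.

Definition rad (n : nat) : nat := \prod_(p <- primes n) p.

Lemma rad_gt0 n : 0 < rad n.
Proof.
rewrite /rad big_seq; apply: prodn_cond_gt0 => p.
by rewrite mem_primes => /andP[/prime_gt0].
Qed.

Lemma kappa_Z_of_nat n : kappa (Z.of_nat n) = rad n.
Proof. by rewrite /kappa Zabs2Nat.id. Qed.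

Lemma prod_prime_expn_dvd (s : seq nat) k M : uniq s -> all prime s ->
  (forall p, p \in s -> p ^ k %| M) -> \prod_(p <- s) p ^ k %| M.
Proof.
elim: s => [|p s IHs] /=; first by rewrite big_nil dvd1n.
case/andP=> p_s uniq_s /andP[pr_p pr_s] dvdM.
have cop : coprime (p ^ k) (\prod_(q <- s) q ^ k).
  rewrite coprimeXl // prime_coprime // Euclid_dvd_prod //.
  rewrite big_has; apply/hasP => -[q q_s].
  have pr_q : prime q by move/allP: pr_s; apply.
  rewrite Euclid_dvdX // dvdn_prime2 // => /andP[/eqP pq _].
  by move: p_s; rewrite pq q_s.
rewrite big_cons Gauss_dvd // dvdM ?mem_head //= IHs // => q q_s.
by apply: dvdM; rewrite in_cons q_s orbT.
Qed.

Lemma rad_expn_dvd n k M :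
  (forall p, prime p -> p %| n -> p ^ k %| M) -> rad n ^ k %| M.
Proof.
move=> dvdM; rewrite /rad (big_morph (fun x => x ^ k) (fun x y => expnMn x y k) (exp1n k)).
apply: prod_prime_expn_dvd; first exact: primes_uniq.
  by apply/allP => p; rewrite mem_primes => /andP[].
by move=> p; rewrite mem_primes => /and3P[pr_p _ p_n]; apply: dvdM.
Qed.

Lemma rad_k_full_le k m : k_full k m -> rad m ^ k <= m.
Proof. by case=> m_gt0 kfull; apply: dvdn_leq => //; apply: rad_expn_dvd. Qed.

Lemma rad_dvd_mul a d b m n : 0 < m -> 0 < n -> a %| m -> b %| n ->
  rad (a * d * b) %| rad m * rad n * d.
Proof.
move=> m_gt0 n_gt0 a_m b_n; rewrite -[rad _]expn1; apply: rad_expn_dvd => p pr_p.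
have dvd_rad N : 0 < N -> p %| N -> p %| rad N.
  move=> N_gt0 p_N; rewrite /rad (big_rem p) /=; first exact: dvdn_mulr.
  by rewrite mem_primes pr_p N_gt0.
rewrite expn1 !Euclid_dvdM // => /orP[/orP[p_a|p_d]|p_b].
- by rewrite dvd_rad // (dvdn_trans p_a).
- by rewrite p_d orbT.
- by rewrite [p %| rad n]dvd_rad ?orbT // (dvdn_trans p_b).
Qed.

Lemma ltn_coprime_gcd_decomp m n : 0 < m < n ->
  exists a d g, [/\ 0 < a, 0 < d, coprime a d, m = a * g & n = (a + d) * g].
Proof.
case/andP=> m_gt0 lt_mn.
have g_gt0 : 0 < gcdn m n by rewrite gcdn_gt0 m_gt0.
have [a Ha] : exists a, m = a * gcdn m n.
  by exists (m %/ gcdn m n); rewrite divnK ?dvdn_gcdl.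
have [b Hb] : exists b, n = b * gcdn m n.
  by exists (n %/ gcdn m n); rewrite divnK ?dvdn_gcdr.
move: g_gt0 Ha Hb; set g := gcdn m n => g_gt0 Ha Hb.
have lt_ab : a < b by rewrite -(ltn_pmul2r g_gt0) -Ha -Hb.
have cop_ab : coprime a b.
  by rewrite /coprime -(eqn_pmul2r g_gt0) muln_gcdl -Ha -Hb mul1n.
exists a, (b - a), g; split => //.
- by rewrite lt0n; apply: contraTneq m_gt0 => a0; rewrite Ha a0.
- by rewrite subn_gt0.
- by rewrite /coprime -gcdnDl (subnKC (ltnW lt_ab)).
- by rewrite (subnKC (ltnW lt_ab)).
Qed.
End Radical.

Open Scope R_scope.

Lemma Rpower_gt0 x y : 0 < Rpower x y.
Proof. exact: exp_pos. Qed.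

Lemma Rpower_le1 x y : 1 <= x -> y <= 0 -> Rpower x y <= 1.
Proof. by move=> x_ge1 y_le0; rewrite -(Rpower_O x); [apply: Rle_Rpower | lra]. Qed.

Lemma Rpower_le_self c y : 0 < c <= 1 -> 1 <= y -> Rpower c y <= c.
Proof.
move=> c_01 y_ge1.
have -> : y = 1 + (y - 1) by ring.
rewrite Rpower_plus Rpower_1; last lra.
have : Rpower c (y - 1) <= Rpower 1 (y - 1) by apply: Rle_Rpower_l; lra.
rewrite /Rpower ln_1 Rmult_0_r exp_0 -/(Rpower c (y - 1)) => le1.
have := Rpower_gt0 c (y - 1); nra.
Qed.

Lemma INR_muln a b : INR (a * b)%N = INR a * INR b.
Proof. by rewrite mulnE mult_INR. Qed.

Lemma INR_expn a k : INR (a ^ k)%N = INR a ^ k.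
Proof. by elim: k => [|k IHk]; rewrite ?expn0 // expnS INR_muln IHk. Qed.

Lemma INR_leq a b : (a <= b)%N -> INR a <= INR b.
Proof. by move/leP; apply: le_INR. Qed.

Lemma INR_ge1 n : (0 < n)%N -> 1 <= INR n.
Proof. exact: INR_leq. Qed.

Lemma INR_le_Rpower_inv r N k : (0 < r)%N -> (0 < k)%N -> (r ^ k <= N)%N ->
  INR r <= Rpower (INR N) (/ INR k).
Proof.
move=> r_gt0 k_gt0 le_rN.
have r_pos : 0 < INR r by have := INR_ge1 r r_gt0; lra.
have k_pos : 0 < INR k by have := INR_ge1 k k_gt0; lra.
have {1}-> : INR r = Rpower (INR r ^ k) (/ INR k).
  by rewrite -Rpower_pow // Rpower_mult Rinv_r ?Rpower_1 //; lra.
apply: Rle_Rpower_l; first by apply: Rlt_le; apply: Rinv_0_lt_compat.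
by split; [apply: pow_lt | rewrite -INR_expn; apply: INR_leq].
Qed.

Section ABC.

Variables K delta : R.
Hypothesis K_ge0 : 0 <= K.
Hypothesis abcK : forall a b c : Z, (a + b = c)%Z -> Z.gcd a b = 1%Z -> (a * b * c <> 0)%Z ->
  Rmax (IZR (Z.abs a)) (Rmax (IZR (Z.abs b)) (IZR (Z.abs c)))
    <= K * Rpower (INR (kappa (a * b * c))) (1 + delta).

Lemma abc_coprime_nat a d : (0 < a)%N -> (0 < d)%N -> coprime a d ->
  INR (a + d) <= K * Rpower (INR (rad (a * d * (a + d)))) (1 + delta).
Proof.
move=> a_gt0 d_gt0 /eqP cop_ad.
have gcd_ad : Z.gcd (Z.of_nat a) (Z.of_nat d) = 1%Z by lia.
have nz : (Z.of_nat a * Z.of_nat d * Z.of_nat (a + d) <> 0)%Z by lia.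
have abc_ad := abcK _ _ _ (esym (Nat2Z.inj_add a d)) gcd_ad nz.
rewrite -!Nat2Z.inj_mul kappa_Z_of_nat in abc_ad.
apply: (Rle_trans _ _ _ _ abc_ad).
apply: (Rle_trans _ _ _ _ (Rmax_r _ _)); apply: (Rle_trans _ _ _ _ (Rmax_r _ _)).
by rewrite Z.abs_eq ?INR_IZR_INZ; [apply: Rle_refl | lia].
Qed.

Lemma k_full_gap k m n : (0 < k)%N -> 0 <= delta ->
  k_full k m -> k_full k n -> (m < n)%N ->
  INR n <= K * Rpower (Rpower (INR n) (2 / INR k) * INR (n - m)) (1 + delta).
Proof.
move=> k_gt0 delta_ge0 m_full n_full lt_mn.
have m_gt0 : (0 < m)%N by case: m_full.
have [a [d [g [a_gt0 d_gt0 cop_ad Em En]]]] :=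
  ltn_coprime_gcd_decomp m n (introT andP (conj m_gt0 lt_mn)).
have g_gt0 : (0 < g)%N by move: m_gt0; rewrite Em muln_gt0 => /andP[].
have k_pos : 0 < INR k by have := INR_ge1 k k_gt0; lra.
have rad_root N : k_full k N -> (N <= n)%N -> INR (rad N) <= Rpower (INR n) (/ INR k).
  move=> N_full le_Nn; have N_gt0 : (0 < N)%N by case: N_full.
  apply: (Rle_trans _ _ _ (INR_le_Rpower_inv _ _ _ (rad_gt0 N) k_gt0 (rad_k_full_le _ _ N_full))).
  apply: Rle_Rpower_l; first by left; apply: Rinv_0_lt_compat.
  by split; [have := INR_ge1 N N_gt0; lra | apply: INR_leq].
have rad_mn : INR (rad m) * INR (rad n) <= Rpower (INR n) (2 / INR k).
  have -> : 2 / INR k = / INR k + / INR k by field; lra.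
  rewrite Rpower_plus; apply: Rmult_le_compat; try exact: pos_INR.
  - exact: rad_root (ltnW lt_mn).
  - exact: rad_root (leqnn n).
have rad_abc : INR (rad (a * d * (a + d))) <= Rpower (INR n) (2 / INR k) * INR d.
  apply: (Rle_trans _ _ _ _ (Rmult_le_compat_r _ _ _ (pos_INR d) rad_mn)).
  rewrite -!INR_muln; apply: INR_leq; apply: dvdn_leq.
    by rewrite !muln_gt0 !rad_gt0 d_gt0.
  by apply: rad_dvd_mul; rewrite ?(leq_trans m_gt0 (ltnW lt_mn)) // ?Em ?En dvdn_mulr.
have ad_bound : INR (a + d) <= K * Rpower (Rpower (INR n) (2 / INR k) * INR d) (1 + delta).
  apply: (Rle_trans _ _ _ (abc_coprime_nat a d a_gt0 d_gt0 cop_ad)).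
  have := INR_ge1 _ (rad_gt0 (a * d * (a + d))) => rad_ge1.
  by apply: Rmult_le_compat_l => //; apply: Rle_Rpower_l; lra.
have g_le : INR g <= Rpower (INR g) (1 + delta).
  have g_ge1 := INR_ge1 _ g_gt0.
  by rewrite -{1}(Rpower_1 (INR g)); [apply: Rle_Rpower; lra | lra].
have -> : (n - m = d * g)%N by rewrite En Em -mulnBl addKn.
have d_ge1 := INR_ge1 _ d_gt0.
rewrite {1}En !INR_muln -Rmult_assoc -Rpower_mult_distr.
- by rewrite -Rmult_assoc; apply: Rmult_le_compat => //; apply: pos_INR.
- by apply: Rmult_lt_0_compat; [apply: Rpower_gt0 | lra].
- by have := INR_ge1 _ g_gt0; lra.
Qed.

End ABC.

Lemma short_gap_absurd K c delta a e x N D :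
  0 <= K -> 0 < c < 1 -> K * c < 1 -> 0 <= delta -> (a + e) * (1 + delta) <= 1 ->
  1 <= x <= N -> 1 <= D -> D <= c * Rpower x e ->
  N <= K * Rpower (Rpower N a * D) (1 + delta) -> False.
Proof.
move=> K_ge0 c_01 Kc_lt1 delta_ge0 exp_le1 x_1N D_ge1 D_le N_le.
have [e_lt0 | e_ge0] := Rlt_or_le e 0.
  (* then c x^e <= c < 1 <= D *)
  by have := Rpower_le1 x e (proj1 x_1N) (Rlt_le _ _ e_lt0); nra.
have D_le' : Rpower N a * D <= c * Rpower N (a + e).
  have xN : Rpower x e <= Rpower N e by apply: Rle_Rpower_l; lra.
  have P_gt0 := Rpower_gt0 N a; rewrite Rpower_plus.
  have := Rmult_le_compat_l _ _ _ (Rlt_le _ _ P_gt0) D_le.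
  have : c * Rpower x e <= c * Rpower N e by apply: Rmult_le_compat_l; lra.
  nra.
have : Rpower (Rpower N a * D) (1 + delta) <= c * N.
  apply: (Rle_trans _ _ _ (Rle_Rpower_l _ _ _ _ (conj _ D_le'))); [lra | |].
  - by apply: Rmult_lt_0_compat; [apply: Rpower_gt0 | lra].
  rewrite -Rpower_mult_distr; [|lra|exact: Rpower_gt0].
  apply: Rmult_le_compat; try exact: Rlt_le (Rpower_gt0 _ _).
  - by apply: Rpower_le_self; lra.
  - by rewrite Rpower_mult -{2}(Rpower_1 N); [apply: Rle_Rpower | ]; lra.
nra.
Qed.

Theorem mainTheorem7 :
  abc_conjecture ->
  forall (k : nat) (eps : R), (3 <= k)%N -> 0 < eps ->
  exists c C : R, 0 < c /\ 0 < C /\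
    forall x : R, C <= x ->
    forall m n : nat, k_full k m -> k_full k n ->
      x < INR m <= x + c * Rpower x (1 - (2 + eps) / INR k) ->
      x < INR n <= x + c * Rpower x (1 - (2 + eps) / INR k) ->
      m = n.
Proof.
move=> abc k eps k_ge3 eps_gt0.
have k_ge3R : 3 <= INR k by have := INR_leq _ _ k_ge3; rewrite [INR 3]/=; lra.
have delta_gt0 : 0 < eps / INR k by apply: Rdiv_lt_0_compat; lra.
have [K [K_gt0 abcK]] := abc _ delta_gt0.
have c_gt0 : 0 < / (K + 1) by apply: Rinv_0_lt_compat; lra.
have Kc : (K + 1) * / (K + 1) = 1 by field; lra.
exists (/ (K + 1)), 1; do 2!split => //; first lra.
move=> x x_ge1.
suff gap m n : k_full k m -> k_full k n -> (m < n)%N -> x < INR m ->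
    INR n <= x + / (K + 1) * Rpower x (1 - (2 + eps) / INR k) -> False.
  move=> m n m_full n_full [xm mI] [xn nI].
  case: (ltngtP m n) => [lt_mn | lt_nm | //]; exfalso.
  - exact: gap m n m_full n_full lt_mn xm nI.
  - exact: gap n m n_full m_full lt_nm xn mI.
move=> m_full n_full lt_mn xm nI.
have mn : INR m < INR n by apply: lt_INR; apply/ltP.
apply: (short_gap_absurd K (/ (K + 1)) (eps / INR k) (2 / INR k) (1 - (2 + eps) / INR k)
          x (INR n) (INR (n - m))); try lra.
- split; nra.
- have -> : 2 / INR k + (1 - (2 + eps) / INR k) = 1 - eps / INR k by field; lra.
  nra.
- by apply: INR_ge1; rewrite subn_gt0.
- by rewrite minus_INR; [lra | apply/leP/ltnW].
- by apply: k_full_gap => //; try lra; exact: leq_trans k_ge3.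
Qed.
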